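(* Let $K$ be an abstract simplicial complex with vertex set $\{1,\ldots,m\}$ and $\underline{G}=\{(G_i,e_i)\}_{i=1}^m$ a family of locally compact connected $\mathrm{CW}$ topological groups ($e_i$ the neutral element of $G_i$) which is LS-logarithmic, i.e. $\mathsf{cat}(G_{i_1}\times\cdots\times G_{i_k})=\sum_{j=1}^k\mathsf{cat}(G_{i_j})$ for every $1\le i_1<\cdots<i_k\le m$. Then $$\mathsf{TC}(\underline{G}^K)\ \ge\ \max\Big\{\sum_{i\in\sigma_1\cup\sigma_2}\mathsf{cat}(G_i)\colon\sigma_1,\sigma_2\in K\Big\}.$$
   Context: $\mathsf{cat}$ is the reduced Lusternik–Schnirelmann category. $\mathsf{TC}(X)$ is Farber's (reduced) topological complexity: the least $n$ such that $X\times X$ has an open cover $\{U_0,\ldots,U_n\}$ with a continuous section on each $U_i$ of $e_{01}\colon X^{[0,1]}\to X\times X$, $\gamma\mapsto(\gamma(0),\gamma(1))$. The polyhedral product is $\underline{G}^K=\bigcup_{\sigma\in K}\underline{G}^{\sigma}\subseteq\prod_{i=1}^m G_i$, where $\underline{G}^{\sigma}=\prod_{i=1}^m Y_i$ with $Y_i=G_i$ if $i\in\sigma$ and $Y_i=\{e_i\}$ otherwise. *)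

From HB Require Import structures.
From mathcomp Require Import all_boot all_order all_algebra.
From mathcomp Require Import all_classical all_reals all_analysis.
Set Implicit Arguments. Unset Strict Implicit. Unset Printing Implicit Defensive.
Import Order.TTheory GRing.Theory Num.Theory.
Local Open Scope classical_set_scope.
Local Open Scope ring_scope.

Section Defs.
Variable R : realType.

Definition unitI : set R^o := [set t | 0 <= t <= 1].

Definition disk (n : nat) : set 'rV[R^o]_n :=
  [set v | \sum_(i < n) v ord0 i ^+ 2 <= 1].
Definition open_disk (n : nat) : set 'rV[R^o]_n :=
  [set v | \sum_(i < n) v ord0 i ^+ 2 < 1].
Definition sphere (n : nat) : set 'rV[R^o]_n :=
  [set v | \sum_(i < n) v ord0 i ^+ 2 = 1].

(* CW complex structure on a space X: Hausdorff, partitioned into open cells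
   e_j = phi_j(open disk) with characteristic maps phi_j continuous on the
   closed disk, homeomorphisms from the open disk onto e_j, closure-finite
   (boundary sphere mapped into finitely many cells of lower dimension) and
   with the weak topology. *)
Definition CW_complex (X : topologicalType) : Prop :=
  hausdorff_space X /\
  exists (I : Type) (dim : I -> nat) (phi : forall j, 'rV[R^o]_(dim j) -> X),
    let cell j := phi j @` @open_disk (dim j) in
    (forall j, {within @disk (dim j), continuous (phi j)}) /\
    (forall x, exists j, cell j x) /\
    (forall j k x, cell j x -> cell k x -> j = k) /\
    (forall j, exists psi : X -> 'rV[R^o]_(dim j),
        (forall v, @open_disk (dim j) v -> psi (phi j v) = v) /\
        {within cell j, continuous psi}) /\
    (forall j, exists F : set I, finite_set F /\
        (forall k, F k -> (dim k < dim j)%N) /\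
        phi j @` @sphere (dim j) `<=` \bigcup_(k in F) cell k) /\
    (forall C : set X,
        (forall j, closed (C `&` phi j @` @disk (dim j))) -> closed C).

Definition topgroup (T : topologicalType) (mul : T -> T -> T) (inv : T -> T)
  (e : T) : Prop :=
  associative mul /\ left_id e mul /\ left_inverse e inv mul /\
  continuous (fun p : T * T => mul p.1 p.2) /\ continuous inv.

Definition rel_open (X : topologicalType) (A U : set X) : Prop :=
  exists V, open V /\ U = A `&` V.

Definition null_in (X : topologicalType) (A U : set X) : Prop :=
  exists H : X * R^o -> X,
    {within U `*` unitI, continuous H} /\
    (forall x t, U x -> unitI t -> A (H (x, t))) /\
    (forall x, U x -> H (x, 0) = x) /\
    (exists c, forall x, U x -> H (x, 1) = c).

(* reduced LS category of the subspace A of X *)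
Definition LScat_le (X : topologicalType) (A : set X) (n : nat) : Prop :=
  exists U : 'I_n.+1 -> set X,
    (forall i, rel_open A (U i)) /\ A `<=` \bigcup_i U i /\
    (forall i, null_in A (U i)).

Definition LScat (X : topologicalType) (A : set X) : \bar R :=
  ereal_inf [set (n%:R)%:E | n in LScat_le A].

(* reduced topological complexity of the subspace A of X: a continuous section
   of e01 : A^[0,1] -> A x A over U is written, via the exponential law, as a
   continuous map s : U x [0,1] -> A with s(p,0) = p.1, s(p,1) = p.2 *)
Definition TC_le (X : topologicalType) (A : set X) (n : nat) : Prop :=
  exists U : 'I_n.+1 -> set (X * X),
    (forall i, rel_open (A `*` A) (U i)) /\ A `*` A `<=` \bigcup_i U i /\
    (forall i, exists s : (X * X) * R^o -> X,
        {within U i `*` unitI, continuous s} /\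
        (forall p t, U i p -> unitI t -> A (s (p, t))) /\
        (forall p, U i p -> s (p, 0) = p.1 /\ s (p, 1) = p.2)).

Definition TC (X : topologicalType) (A : set X) : \bar R :=
  ereal_inf [set (n%:R)%:E | n in TC_le A].

End Defs.

Definition simplicial_complex (m : nat) (K : {set {set 'I_m}}) : Prop :=
  (finset.set0 \in K) /\
  (forall s t : {set 'I_m}, s \in K -> t \subset s -> t \in K) /\
  (forall i : 'I_m, [set i]%SET \in K).

Definition poly_cell (m : nat) (G : 'I_m -> topologicalType)
  (e : forall i, G i) (s : {set 'I_m}) : set (prod_topology G) :=
  [set x | forall i, i \notin s -> x i = e i].

Definition poly_prod (m : nat) (G : 'I_m -> topologicalType)
  (e : forall i, G i) (K : {set {set 'I_m}}) : set (prod_topology G) :=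
  \bigcup_(s in [set s | s \in K]) poly_cell e s.

From HB Require Import structures.
From mathcomp Require Import all_boot all_order all_algebra.
From mathcomp Require Import all_classical all_reals all_analysis.
Import Order.TTheory GRing.Theory Num.Theory.
Local Open Scope classical_set_scope.
Local Open Scope ring_scope.

(* For [σ1, σ2 ∈ K] put [S = σ1 ∪ σ2] and send [x ∈ G^S] to the pair
   [(a x, b x) ∈ G^K × G^K], where [a x] is [x^-1] on [σ1] and [e] elsewhere
   and [b x] is [e] on [σ1] and [x] elsewhere; note [(a x)^-1 (b x) = x].
   If [s] is a motion planner on an open [U ⊆ G^K × G^K], then on the
   preimage of [U] the homotopy [(x, t) ↦ proj_S (s(a x, b x, t)^-1 (b x))]
   runs from [x] to [e] inside [G^S].  Hence [cat(G^S) ≤ TC(G^K)], and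
   LS-logarithmicity rewrites [cat(G^S)] as the sum of the [cat(G_i)]. *)

Lemma continuous_prod_topology (I : eqType) (T : I -> topologicalType)
    (Y : topologicalType) (h : Y -> prod_topology T) :
  (forall i, continuous (fun y => h y i)) -> continuous h.
Proof.
move=> ch y; apply/cvg_sup => i.
have im_proj : range (fun g : prod_topology T => g i) = setT.
  by apply/seteqP; split=> // z _; exists (dfwith (h y) i z) => //; rewrite dfwithin.
rewrite cvg_image // => W /= /ch; rewrite nbhs_simpl /= => hW.
exists ((fun g : prod_topology T => g i) @^-1` W) => //.
by rewrite image_preimage // im_proj.
Qed.

(* [proj_continuous] is stated for a copy of the product topology that does
   not unify with [prod_topology T], so it is instantiated by hand. *)
Lemma continuous_coord (I : eqType) (T : I -> topologicalType)
    (Y : topologicalType) (h : Y -> prod_topology T) i :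
  continuous h -> continuous (fun y => h y i).
Proof.
move=> ch y.
exact: (@continuous_comp _ _ _ h (fun x : prod_topology T => x i) y (ch y)
  (@proj_continuous I T i (h y))).
Qed.

Lemma continuous_comp2 (T U V W : topologicalType) (h : U -> V -> W)
    (u : T -> U) (v : T -> V) :
  continuous (fun q : U * V => h q.1 q.2) -> continuous u -> continuous v ->
  continuous (fun x => h (u x) (v x)).
Proof. by move=> ch cu cv x; apply: continuous2_cvg (ch _) (cu x) (cv x). Qed.

Lemma within_continuous_pair (T U V : topologicalType) (A : set T)
    (f : T -> U) (g : T -> V) :
  {within A, continuous f} -> {within A, continuous g} ->
  {within A, continuous (fun x => (f x, g x))}.
Proof. by move=> cf cg x; apply: cvg_pair (cf x) (cg x). Qed.

Lemma within_continuous_comp_within (T U W : topologicalType) (A : set T) (B : set U)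
    (f : T -> U) (g : U -> W) :
  {within A, continuous f} -> {within B, continuous g} ->
  (forall x, A x -> B (f x)) -> {within A, continuous (g \o f)}.
Proof.
move=> /continuousP cf /continuousP cg fAB; apply/continuousP => O oO.
have /open_subspaceP [V oV VB] := cg O oO.
have /open_subspaceP [V' oV' V'A] := cf V oV.
apply/open_subspaceP; exists V' => //; rewrite V'A.
apply/seteqP; split=> x [Vx Ax]; split=> //.
  have : (V `&` B) (f x) by split=> //; exact: fAB.
  by rewrite VB => -[].
have : (g @^-1` O `&` B) (f x) by split=> //; exact: fAB.
by rewrite -VB => -[].
Qed.

Section CategoryFromComplexity.
Variables (R : realType) (X Y : topologicalType) (A : set X) (C : set Y).

(* [Phi y] transports the path planned from [(f y).1] to [(f y).2] into a
   contraction of [y] to [c] within [C]. *)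
Lemma LScat_le_of_TC_le (f : Y -> X * X) (Phi : Y -> X -> Y) (c : Y) n :
  continuous f -> continuous (fun p : Y * X => Phi p.1 p.2) ->
  (forall y, C y -> (A `*` A) (f y)) ->
  (forall y z, C y -> A z -> C (Phi y z)) ->
  (forall y, C y -> Phi y (f y).1 = y) ->
  (forall y, C y -> Phi y (f y).2 = c) ->
  TC_le R A n -> LScat_le R C n.
Proof.
move=> cf cPhi fCA PhiC Phi_fst Phi_snd [U [Uo [Ucov Us]]].
exists (fun j => C `&` f @^-1` U j); split; [|split].
- move=> j; have [W [oW ->]] := Uo j; exists (f @^-1` W); split.
    by move/continuousP: cf; apply.
  apply/seteqP; split=> y [Cy fy]; split=> //; first by case: fy.
  by split=> //; exact: fCA.
- by move=> y Cy; have [j _ Ujy] := Ucov _ (fCA y Cy); exists j.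
move=> j; have [s [cs [sA sE]]] := Us j.
exists (fun p => Phi p.1 (s (f p.1, p.2))); split; [|split; [|split]].
- apply: (@within_continuous_comp _ _ _ _ (fun p => (p.1, s (f p.1, p.2)))
    (fun q => Phi q.1 q.2)); first by move=> q _; exact: cPhi.
  apply: within_continuous_pair.
    by apply: continuous_subspaceT => p; exact: cvg_fst.
  apply: (@within_continuous_comp_within _ _ _ _ (U j `*` @unitI R)
    (fun p => (f p.1, p.2)) s) => //; last by move=> p [[_ Ujp] It].
  apply: within_continuous_pair; apply: continuous_subspaceT => p.
    by apply: continuous_comp; [exact: cvg_fst | exact: cf].
  exact: cvg_snd.
- by move=> y t [Cy Ujy] It; apply: PhiC => //; exact: sA.
- by move=> y [Cy Ujy]; rewrite (proj1 (sE _ Ujy)) Phi_fst.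
- by exists c => y [Cy Ujy]; rewrite (proj2 (sE _ Ujy)) Phi_snd.
Qed.

Lemma LScat_le_TC :
  (forall n, TC_le R A n -> LScat_le R C n) -> (LScat R C <= TC R A)%E.
Proof. by move=> TC_LS; apply: ereal_inf_le_tmp => _ [n /TC_LS ? <-]; exists n. Qed.

End CategoryFromComplexity.

Section TopGroup.
Context {T : topologicalType} {mul : T -> T -> T} {inv : T -> T} {e : T}.
Hypothesis Tgrp : topgroup mul inv e.

Let mulA : associative mul. Proof. by case: Tgrp. Qed.
Let mul1g : left_id e mul. Proof. by case: Tgrp => _ []. Qed.
Let mulVg : left_inverse e inv mul. Proof. by case: Tgrp => _ [_ []]. Qed.

Lemma topgroup_mulV x : mul x (inv x) = e.
Proof.
transitivity (mul (mul (inv (inv x)) (inv x)) (mul x (inv x))).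
  by rewrite mulVg mul1g.
by rewrite -mulA (mulA (inv x)) mulVg mul1g mulVg.
Qed.

Lemma topgroup_mul1 x : mul x e = x.
Proof. by rewrite -(mulVg x) mulA topgroup_mulV mul1g. Qed.

Lemma topgroup_invK x : inv (inv x) = x.
Proof. by rewrite -[inv (inv x)]topgroup_mul1 -(mulVg x) mulA mulVg mul1g. Qed.

Lemma topgroup_inv1 : inv e = e.
Proof. by rewrite -[inv e]topgroup_mul1 mulVg. Qed.

End TopGroup.

Section PolyhedralProduct.
Variables (m : nat) (G : 'I_m -> topologicalType).
Variables (mul : forall i, G i -> G i -> G i) (inv : forall i, G i -> G i).
Variable e : forall i, G i.
Hypothesis Ggrp : forall i, topgroup (mul i) (inv i) (e i).
Local Notation X := (prod_topology G).

Definition prod_mul (x y : X) : X := fun i => mul i (x i) (y i).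
Definition prod_inv (x : X) : X := fun i => inv i (x i).

Let continuous_proj i : continuous (fun x : X => x i).
Proof. by apply: (@continuous_coord _ _ _ id) => x; exact: cvg_id. Qed.

Lemma topgroup_prod : topgroup prod_mul prod_inv (e : X).
Proof.
split; [|split; [|split; [|split]]].
- move=> x y z; apply: functional_extensionality_dep => i.
  by case: (Ggrp i) => mulA _; exact: mulA.
- move=> x; apply: functional_extensionality_dep => i.
  by case: (Ggrp i) => _ [mul1g _]; exact: mul1g.
- move=> x; apply: functional_extensionality_dep => i.
  by case: (Ggrp i) => _ [_ [mulVg _]]; exact: mulVg.
- apply: continuous_prod_topology => i.
  have [_ [_ [_ [cmul _]]]] := Ggrp i.
  by apply: continuous_comp2 cmul _ _; apply: continuous_coord => q;
    [exact: cvg_fst | exact: cvg_snd].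
- apply: continuous_prod_topology => i x.
  have [_ [_ [_ [_ cinv]]]] := Ggrp i.
  exact: continuous_comp (continuous_proj i x) (cinv _).
Qed.

Definition cell_proj (S : {set 'I_m}) (x : X) : X :=
  fun i => if i \in S then x i else e i.

Lemma cell_proj_continuous S : continuous (cell_proj S).
Proof.
apply: continuous_prod_topology => i; rewrite /cell_proj.
by case: (i \in S); [exact: continuous_proj | exact: cst_continuous].
Qed.

Lemma cell_proj_cell S x : poly_cell e S (cell_proj S x).
Proof. by move=> i /negbTE iS; rewrite /cell_proj iS. Qed.

Lemma cell_proj_id S x : poly_cell e S x -> cell_proj S x = x.
Proof.
move=> Sx; apply: functional_extensionality_dep => i; rewrite /cell_proj.
by case: ifPn => // /Sx.
Qed.

Lemma cell_proj_e S : cell_proj S e = e.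
Proof. by apply: functional_extensionality_dep => i; rewrite /cell_proj; case: ifP. Qed.

Lemma cell_proj_setC S T x :
  poly_cell e (S :|: T) x -> poly_cell e T (cell_proj (~: S) x).
Proof.
move=> STx i iT; rewrite /cell_proj finset.in_setC; case: ifPn => // iS.
by apply: STx; rewrite finset.in_setU negb_or iS iT.
Qed.

Lemma prod_mul_inv_cell_proj S x :
  prod_mul (prod_inv (cell_proj S (prod_inv x))) (cell_proj (~: S) x) = x.
Proof.
apply: functional_extensionality_dep => i.
rewrite /prod_mul /prod_inv /cell_proj finset.in_setC; case: ifP => _ /=.
  by rewrite (topgroup_invK (Ggrp i)) (topgroup_mul1 (Ggrp i)).
by rewrite (topgroup_inv1 (Ggrp i)); case: (Ggrp i) => _ [].
Qed.

Lemma LScat_poly_cell_le_TC (R : realType) (K : {set {set 'I_m}}) s1 s2 :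
  s1 \in K -> s2 \in K ->
  (LScat R (poly_cell e (s1 :|: s2)) <= TC R (poly_prod e K))%E.
Proof.
move=> Ks1 Ks2; apply: LScat_le_TC => n.
have [_ [_ [mulVg [cmul cinv]]]] := topgroup_prod.
apply: (@LScat_le_of_TC_le _ _ _ _ _
  (fun x => (cell_proj s1 (prod_inv x), cell_proj (~: s1) x))
  (fun x z => cell_proj (s1 :|: s2) (prod_mul (prod_inv z) (cell_proj (~: s1) x)))
  e).
- move=> x; exact: cvg_pair
    (continuous_comp (cinv x) (cell_proj_continuous _ _)) (cell_proj_continuous _ x).
- have cmul_inv : continuous (fun p : X * X =>
      prod_mul (prod_inv p.2) (cell_proj (~: s1) p.1)).
    apply: continuous_comp2 cmul _ _ => p.
      exact: continuous_comp cvg_snd (cinv _).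
    exact: continuous_comp cvg_fst (cell_proj_continuous _ _).
  by move=> p; exact: continuous_comp (cmul_inv p) (cell_proj_continuous _ _).
- move=> x S12x; split; first by exists s1 => //; exact: cell_proj_cell.
  by exists s2 => //; exact: cell_proj_setC.
- by move=> x z _ _; exact: cell_proj_cell.
- by move=> x S12x; rewrite /= prod_mul_inv_cell_proj cell_proj_id.
- by move=> x _; rewrite /= mulVg cell_proj_e.
Qed.

End PolyhedralProduct.

Theorem lemma5p5 (R : realType) (m : nat) (K : {set {set 'I_m}})
  (G : 'I_m -> topologicalType)
  (mul : forall i, G i -> G i -> G i) (inv : forall i, G i -> G i)
  (e : forall i, G i) :
  simplicial_complex K ->
  (forall i, topgroup (mul i) (inv i) (e i)) ->
  (forall i, locally_compact [set: G i]) ->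
  (forall i, connected [set: G i]) ->
  (forall i, CW_complex R (G i)) ->
  (forall S : {set 'I_m}, S != finset.set0 ->
     LScat R (poly_cell e S) = (\sum_(i in S) LScat R [set: G i])%E) ->
  forall s1 s2 : {set 'I_m}, s1 \in K -> s2 \in K ->
    ((\sum_(i in (s1 :|: s2)%SET) LScat R [set: G i]) <= TC R (poly_prod e K))%E.
Proof.
move=> _ Ggrp _ _ _ LS_logarithmic s1 s2 Ks1 Ks2.
have [->|S12_neq0] := eqVneq (s1 :|: s2)%SET finset.set0.
  by rewrite big_set0; apply: le_ereal_inf_tmp => _ [n _ <-]; rewrite lee_fin.
by rewrite -LS_logarithmic //; exact: LScat_poly_cell_le_TC.
Qed.
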